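(* Let $A$ be a finite multiset of $n$ points in $\mathbb{R}^d$ with mean $\mu$, let $\varepsilon,\delta\in(0,1)$, $b>0$, $k=b\log\delta^{-1}$ and $r=\frac{1}{11}\sqrt{\frac{\varepsilon\,\mathrm{Opt}}{n}}$. Let $\hat\mu_1,\dots,\hat\mu_k\in\mathbb{R}^d$ be points such that at least $\frac{7}{10}b\log\delta^{-1}$ indices $i$ satisfy $\|\hat\mu_i-\mu\|\le r$. Let $m$ be the coordinate-wise median of $\hat\mu_1,\dots,\hat\mu_k$. Then $\|m-\mu\|\le b\log\delta^{-1}\cdot r$.
   Context: $\mu=\frac1n\sum_{p\in A}p$, $\mathrm{Opt}=\sum_{p\in A}\|p-\mu\|^2$. The coordinate-wise median $m$ is the point whose $l$-th coordinate, for each $l\in\{1,\dots,d\}$, is a median of the multiset $\{(\hat\mu_1)_l,\dots,(\hat\mu_k)_l\}$ (chosen among these values). *)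

From HB Require Import structures.
From mathcomp Require Import all_boot all_order all_algebra.
From mathcomp Require Import all_classical all_reals all_analysis.
Set Implicit Arguments. Unset Strict Implicit. Unset Printing Implicit Defensive.
Import Order.TTheory GRing.Theory Num.Theory.
Local Open Scope ring_scope.

Definition enorm {R : realType} {d : nat} (v : 'rV[R]_d) : R :=
  Num.sqrt (\sum_(l < d) v 0 l ^+ 2).

Definition mean {R : realType} {d n : nat} (A : 'I_n -> 'rV[R]_d) : 'rV[R]_d :=
  (n%:R)^-1 *: \sum_(i < n) A i.

Definition Opt {R : realType} {d n : nat} (A : 'I_n -> 'rV[R]_d) : R :=
  \sum_(i < n) enorm (A i - mean A) ^+ 2.

Definition is_median {R : realType} {k : nat} (x : 'I_k -> R) (v : R) : Prop :=
  [/\ exists i, x i = v,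
      (k <= 2 * #|[set i | (x i <= v)%R]|)%N &
      (k <= 2 * #|[set i | (v <= x i)%R]|)%N].

Definition is_coord_median {R : realType} {d k : nat}
  (muhat : 'I_k -> 'rV[R]_d) (m : 'rV[R]_d) : Prop :=
  forall l : 'I_d, is_median (fun i => muhat i 0 l) (m 0 l).

From HB Require Import structures.
From mathcomp Require Import all_boot all_order all_algebra.
From mathcomp Require Import all_classical all_reals all_analysis.
From mathcomp Require Import lra zify.
Set Implicit Arguments. Unset Strict Implicit. Unset Printing Implicit Defensive.
Import Order.TTheory GRing.Theory Num.Theory.
Local Open Scope ring_scope.

(* Since at least 7/10 of the k estimates are good, any half of the indices
   contains a good one.  In each coordinate the median is dominated by a value
   on the far side of it from the mean, so some good estimate is at least as far
   from the mean as the median is.  Summing over coordinates bounds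
   ||m - mu||^2 by the sum of ||muhat_i - mu||^2 over the good indices, which is
   at most k r^2 <= (k r)^2. *)

Lemma card_gt_common_mem (T : finType) (A B : {set T}) :
  (#|T| < #|A| + #|B|)%N -> exists2 x, x \in A & x \in B.
Proof.
move=> ltT; have : (0 < #|A :&: B|)%N.
  by rewrite -(ltn_add2l #|A :|: B|) addn0 cardsUI (leq_ltn_trans (max_card _)).
by rewrite card_gt0 => /set0Pn[x]; rewrite inE => /andP[]; exists x.
Qed.

Lemma seven_tenths_majority (R : realFieldType) (k g : nat) :
  (0 < k)%N -> 7 / 10 * (k%:R : R) <= g%:R -> (k < 2 * g)%N.
Proof.
rewrite -(ltr0n R) => k_gt0 kg; rewrite -(ltr_nat R) natrM.
lra.
Qed.

Lemma median_near_majority (R : realType) (k : nat) (x : 'I_k -> R) (v c : R)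
    (G : {set 'I_k}) :
  is_median x v -> (k < 2 * #|G|)%N -> exists2 i, i \in G & `|v - c| <= `|x i - c|.
Proof.
case=> _ below above majG.
have meets (U : {set 'I_k}) : (k <= 2 * #|U|)%N -> exists2 i, i \in U & i \in G.
  by move=> halfU; apply: card_gt_common_mem; rewrite card_ord; lia.
have [cv|vc] := lerP c v.
- have [i] := meets _ above; rewrite inE => vxi iG; exists i => //.
  by rewrite !ger0_norm ?subr_ge0 ?lerD2r // (le_trans cv).
- have [i] := meets _ below; rewrite inE => xiv iG; exists i => //.
  have xic : x i < c := le_lt_trans xiv vc.
  by rewrite !ltr0_norm ?subr_lt0 // opprB lerD2l lerN2.
Qed.

Section EuclideanNorm.
Variables (R : realType) (d : nat).

Lemma enorm_ge0 (v : 'rV[R]_d) : 0 <= enorm v.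
Proof. exact: sqrtr_ge0. Qed.

Lemma enorm_sqr (v : 'rV[R]_d) : enorm v ^+ 2 = \sum_(l < d) v 0 l ^+ 2.
Proof. by rewrite sqr_sqrtr // sumr_ge0 // => l _; rewrite sqr_ge0. Qed.

Lemma enorm_sqr_le_sum (k : nat) (v : 'rV[R]_d) (w : 'I_k -> 'rV[R]_d)
    (G : {set 'I_k}) :
  (forall l, exists2 i, i \in G & `|v 0 l| <= `|w i 0 l|) ->
  enorm v ^+ 2 <= \sum_(i in G) enorm (w i) ^+ 2.
Proof.
move=> dominated; rewrite enorm_sqr.
under [X in _ <= X]eq_bigr do rewrite enorm_sqr.
rewrite exchange_big /=; apply: ler_sum => l _.
have [i iG vw] := dominated l.
rewrite (bigD1 i) //= -[v 0 l ^+ 2]real_normK ?num_real // -[w i 0 l ^+ 2]real_normK ?num_real //.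
rewrite ler_wpDr ?sumr_ge0 // => [j _|]; first exact: sqr_ge0.
by rewrite lerXn2r ?nnegrE.
Qed.

End EuclideanNorm.

Lemma le_mul_of_sqr_le (R : realFieldType) (x k r : R) :
  0 <= r -> 1 <= k -> x ^+ 2 <= k * r ^+ 2 -> x <= k * r.
Proof.
move=> r_ge0 k_ge1 xkr; have k_ge0 : 0 <= k by apply: le_trans k_ge1.
have [x_le0|x_gt0] := lerP x 0; first by rewrite (le_trans x_le0) ?mulr_ge0.
rewrite -ler_sqr ?nnegrE ?mulr_ge0 ?(ltW x_gt0) //; apply: (le_trans xkr).
by rewrite exprMn ler_wpM2r ?sqr_ge0 // expr2 ler_peMl.
Qed.

Theorem lemma3p5 (R : realType) (d n : nat) (A : 'I_n -> 'rV[R]_d)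
  (eps delta b : R) (k : nat) (muhat : 'I_k -> 'rV[R]_d) (m : 'rV[R]_d) :
  (0 < n)%N ->
  0 < eps < 1 -> 0 < delta < 1 -> 0 < b ->
  k%:R = b * ln (delta^-1) ->
  let r := 11^-1 * Num.sqrt (eps * Opt A / n%:R) in
  7 / 10 * b * ln (delta^-1) <=
    (#|[set i | enorm (muhat i - mean A) <= r]|)%:R ->
  is_coord_median muhat m ->
  enorm (m - mean A) <= b * ln (delta^-1) * r.
Proof.
move=> _ _ /andP[delta_gt0 delta_lt1] b_gt0 k_def r.
set G := [set i | _] => good median; rewrite -k_def.
have r_ge0 : 0 <= r by rewrite mulr_ge0 ?invr_ge0 ?sqrtr_ge0.
have k_gt0 : (0 < k)%N.
  by rewrite -(ltr0n R) k_def mulr_gt0 // ln_gt0 // invf_gt1.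
have majG : (k < 2 * #|G|)%N.
  by apply: (@seven_tenths_majority R); rewrite // k_def mulrA.
have near l : exists2 i, i \in G & `|(m - mean A) 0 l| <= `|(muhat i - mean A) 0 l|.
  have [i iG close] := median_near_majority (mean A 0 l) (median l) majG.
  by exists i => //; move: close; rewrite !mxE.
apply: le_mul_of_sqr_le; rewrite ?ler1n //.
apply: (le_trans (enorm_sqr_le_sum near)).
apply: le_trans (_ : \sum_(i in G) r ^+ 2 <= _).
  by apply: ler_sum => i; rewrite inE => ?; rewrite lerXn2r ?nnegrE ?enorm_ge0.
rewrite sumr_const -[r ^+ 2 *+ _]mulr_natl; apply: ler_wpM2r; first exact: sqr_ge0.
by rewrite ler_nat -[k in (_ <= k)%N]card_ord max_card.
Qed.
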